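(* Let $n\ge1$, $N,M\ge1$. Users have opinions $u_i^t\in[-1,1]^n$ ($i=1,\dots,N$) and creators have opinions $c_j^t\in[-1,1]^n$ ($j=1,\dots,M$). Assume the social adjacency matrix $A$ is diagonal, with $A_{ii}\in(0,1]$, and that creators are fully stubborn, $\Gamma=I_M$, so that $c_j^t=c_j^0=:c_j$ for all $t$. Let the recommender be greedy: at each time $t$, user $i$ consumes the content of creator $j(i,t)\in\arg\min_{j}\|c_j^t-u_i^t\|_2$, and the user opinions evolve as $$u_i^{t+1}=(1-\lambda_i)\big(A_{ii}\,u_i^t+(1-A_{ii})\,c_{j(i,t)}\big)+\lambda_i\,u_i^0,$$ with stubbornness $\lambda_i\in(0,1]$. Then the induced user partition $\mathcal F^t_1,\dots,\mathcal F^t_M$, where $\mathcal F^t_j=\{i: j(i,t)=j\}$, is static (i.e. $\mathcal F^t_j=\mathcal F^0_j$ for all $t$ and $j$), and each user's opinion converges to a steady state $u_i^*\in\mathbb R^n$. Moreover, for every user $i\in\mathcal F_j$, the distance $\|u_i^t-c_j\|_2$ decreases monotonically in time, i.e. $\|u_i^{t+1}-c_j\|_2\le\|u_i^t-c_j\|_2$ for all $t\ge0$.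
   Context: This is the multi-topic Friedkin–Johnsen user–creator dynamics specialized to a diagonal social influence matrix $A$ (no user–user interaction) and fully stubborn creators. In the general model, $u^{t+1}_i=(1-\lambda_i)\big(\sum_k A_{ik}u_k^t+\sum_j B^t_{ij}c_j^t\big)+\lambda_i u_i^0$ where $B^t_{ij}\neq0$ only for the creator $j$ consumed by user $i$ at time $t$ and $\sum_kA_{ik}+\sum_jB^t_{ij}=1$; with $A$ diagonal this gives $B^t_{i,j(i,t)}=1-A_{ii}$. The greedy recommender gives each user the single creator closest (in Euclidean norm) to the user's current opinion; ties in the argmin are broken by a fixed deterministic rule (e.g. smallest index). *)

From HB Require Import structures.
From mathcomp Require Import all_boot all_order all_algebra.
From mathcomp Require Import all_classical all_reals all_analysis.
Set Implicit Arguments. Unset Strict Implicit. Unset Printing Implicit Defensive.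
Import Order.TTheory GRing.Theory Num.Theory.
Local Open Scope ring_scope.

Definition norm2 {R : realType} {n : nat} (x : 'rV[R]_n) : R :=
  Num.sqrt (\sum_(k < n) x ord0 k ^+ 2).

Definition in_cube {R : realType} {n : nat} (x : 'rV[R]_n) : Prop :=
  forall k, -1 <= x ord0 k <= 1.

(* Greedy recommendation with smallest-index tie-breaking:
   j is the smallest index in argmin_j' ||c_j' - x||_2. *)
Definition greedy_choice {R : realType} {n M : nat}
  (c : 'I_M -> 'rV[R]_n) (x : 'rV[R]_n) (j : 'I_M) : Prop :=
  (forall j', norm2 (c j - x) <= norm2 (c j' - x)) /\
  (forall j', norm2 (c j' - x) <= norm2 (c j - x) -> (j <= j')%N).

Definition user_part {N M : nat} (jsel : nat -> 'I_N -> 'I_M) (t : nat) (j : 'I_M)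
  : {set 'I_N} := [set i | jsel t i == j].

(* Fix a user and let j be its initial creator.  The update moves the opinion
   towards the segment between c_j and the initial opinion u^0, and by
   induction u^t = c_j + s_t (u^0 - c_j), where s_0 = 1 and
   s_(t+1) = (1 - lam) a s_t + lam stays in (0, 1] and is nonincreasing.
   Along this segment c_j remains the greedy choice, tie-breaking included,
   because the difference of squared distances to two fixed creators is an
   affine function of the opinion.  Hence the selection never changes, u^t
   converges with s_t, and the distance |s_t| |u^0 - c_j| to c_j decreases. *)

From HB Require Import structures.
From mathcomp Require Import all_boot all_order all_algebra.
From mathcomp Require Import all_classical all_reals all_analysis.
From mathcomp Require Import ring lra.
Set Implicit Arguments. Unset Strict Implicit. Unset Printing Implicit Defensive.
Import Order.TTheory GRing.Theory Num.Theory.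
Import numFieldNormedType.Exports.
Local Open Scope classical_set_scope.
Local Open Scope ring_scope.

Section SquaredNorm.
Variables (R : realType) (n : nat).
Implicit Types (x y z : 'rV[R]_n) (s : R).

Definition sqnorm2 x : R := \sum_(k < n) x ord0 k ^+ 2.

Lemma sqnorm2_ge0 x : 0 <= sqnorm2 x.
Proof. by apply: sumr_ge0 => k _; apply: sqr_ge0. Qed.

Lemma ler_norm2 x y : (norm2 x <= norm2 y) = (sqnorm2 x <= sqnorm2 y).
Proof. by rewrite /norm2 ler_sqrt // sqnorm2_ge0. Qed.

Lemma norm2_ge0 x : 0 <= norm2 x.
Proof. exact: sqrtr_ge0. Qed.

Lemma norm2Z s x : norm2 (s *: x) = `|s| * norm2 x.
Proof.
rewrite /norm2 -sqrtr_sqr -sqrtrM ?sqr_ge0 // mulr_sumr.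
by congr Num.sqrt; apply: eq_bigr => k _; rewrite !mxE exprMn.
Qed.

(* p |-> |y - p|^2 - |x - p|^2 is affine, so on the segment from x to z it
   interpolates its values at the endpoints. *)
Lemma sqnorm2_gap_segment x y z s :
  sqnorm2 (y - (x + s *: (z - x))) - sqnorm2 (x - (x + s *: (z - x))) =
  (1 - s) * sqnorm2 (y - x) + s * (sqnorm2 (y - z) - sqnorm2 (x - z)).
Proof.
rewrite /sqnorm2 -!sumrB !mulr_sumr -big_split; apply: eq_bigr => k _.
by rewrite !mxE /=; ring.
Qed.

End SquaredNorm.

Section GreedyChoice.
Variables (R : realType) (n M : nat) (c : 'I_M -> 'rV[R]_n).

Lemma greedy_choice_unique x j1 j2 :
  greedy_choice c x j1 -> greedy_choice c x j2 -> j1 = j2.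
Proof.
move=> [min1 tie1] [min2 tie2]; apply: val_inj; apply/eqP.
by rewrite eqn_leq tie1 ?tie2.
Qed.

Lemma greedy_choice_segment x j s : 0 < s <= 1 ->
  greedy_choice c x j -> greedy_choice c (c j + s *: (x - c j)) j.
Proof.
move=> /andP[s_gt0 s_le1] [minj tiej].
have gap_x j' : 0 <= sqnorm2 (c j' - x) - sqnorm2 (c j - x).
  by rewrite subr_ge0 -ler_norm2.
have gap_c j' : 0 <= (1 - s) * sqnorm2 (c j' - c j).
  by rewrite mulr_ge0 ?sqnorm2_ge0 ?subr_ge0.
split=> j'.
- rewrite ler_norm2 -subr_ge0 sqnorm2_gap_segment.
  by rewrite addr_ge0 ?gap_c ?mulr_ge0 ?gap_x ?ltW.
- rewrite ler_norm2 -subr_le0 sqnorm2_gap_segment => gap_le0.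
  apply: tiej; rewrite ler_norm2 -subr_le0 -(pmulr_rle0 _ s_gt0).
  by have := gap_c j'; lra.
Qed.

End GreedyChoice.

Section ContractionRatio.
Variables (R : realType) (al lam : R).
Hypotheses (al_ge0 : 0 <= al) (lam_gt0 : 0 < lam) (al_lam_le1 : al + lam <= 1).

Definition contraction_ratio (t : nat) : R := iter t (fun s => al * s + lam) 1.

Local Notation s := contraction_ratio.

Lemma contraction_ratio_gt0 t : 0 < s t.
Proof.
elim: t => [|t IH] /=; first exact: ltr01.
by apply: ltr_wpDl; rewrite // mulr_ge0 // ltW.
Qed.

Lemma contraction_ratio_le1 t : s t <= 1.
Proof.
elim: t => [|t IH] //=; apply: le_trans al_lam_le1.
by rewrite lerD2r ler_piMr.
Qed.

Lemma contraction_ratio_nonincreasing t : s t.+1 <= s t.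
Proof.
elim: t => [|t IH]; first by rewrite /= mulr1.
by rewrite [s t.+2]/= lerD2r ler_wpM2l.
Qed.

Lemma contraction_ratio_cvg : s @ \oo --> inf (range s).
Proof.
apply: nonincreasing_cvgn.
  by apply/nonincreasing_seqP => t; apply: contraction_ratio_nonincreasing.
by exists 0 => _ [t _ <-]; apply: ltW; apply: contraction_ratio_gt0.
Qed.

End ContractionRatio.

Section UserTrajectory.
Variables (R : realType) (n M : nat) (c : 'I_M -> 'rV[R]_n) (a lam : R).
Variables (u : nat -> 'rV[R]_n) (j : nat -> 'I_M).
Hypotheses (a_ge0 : 0 <= a) (a_le1 : a <= 1) (lam_gt0 : 0 < lam) (lam_le1 : lam <= 1).
Hypothesis greedy_u : forall t, greedy_choice c (u t) (j t).
Hypothesis u_step : forall t,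
  u t.+1 = (1 - lam) *: (a *: u t + (1 - a) *: c (j t)) + lam *: u 0%N.

Local Notation s := (contraction_ratio ((1 - lam) * a) lam).

Let al_ge0 : 0 <= (1 - lam) * a.
Proof. by rewrite mulr_ge0 // subr_ge0. Qed.

Let al_lam_le1 : (1 - lam) * a + lam <= 1.
Proof.
have : 0 <= (1 - lam) * (1 - a) by rewrite mulr_ge0 // subr_ge0.
lra.
Qed.

Lemma trajectory_on_segment t :
  j t = j 0%N /\ u t = c (j 0%N) + s t *: (u 0%N - c (j 0%N)).
Proof.
elim: t => [|t [jt ut]].
  by split=> //; rewrite scale1r addrC subrK.
have ut1 : u t.+1 = c (j 0%N) + s t.+1 *: (u 0%N - c (j 0%N)).
  by rewrite u_step jt ut; apply/matrixP => p q; rewrite !mxE /=; ring.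
split=> //; apply: (greedy_choice_unique (greedy_u t.+1)); rewrite ut1.
apply: greedy_choice_segment (greedy_u 0%N).
by rewrite contraction_ratio_gt0 ?contraction_ratio_le1.
Qed.

Lemma selection_constant t : j t = j 0%N.
Proof. exact: (trajectory_on_segment t).1. Qed.

Lemma trajectory_cvg : exists ustar : 'rV[R]_n, u @ \oo --> ustar.
Proof.
have -> : u = fun t => c (j 0%N) + s t *: (u 0%N - c (j 0%N)).
  by apply: funext => t; rewrite (trajectory_on_segment t).2.
exists (c (j 0%N) + inf (range s) *: (u 0%N - c (j 0%N))).
apply: cvgD; first exact: cvg_cst.
exact: cvgZr_tmp (contraction_ratio_cvg al_ge0 lam_gt0 al_lam_le1).
Qed.

Lemma dist_selected_nonincreasing t :
  norm2 (u t.+1 - c (j 0%N)) <= norm2 (u t - c (j 0%N)).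
Proof.
rewrite (trajectory_on_segment t).2 (trajectory_on_segment t.+1).2.
rewrite !(addrC (c (j 0%N))) !addrK !norm2Z.
apply: ler_wpM2r; first exact: norm2_ge0.
rewrite !ger0_norm; first exact: contraction_ratio_nonincreasing.
all: by rewrite ltW ?contraction_ratio_gt0.
Qed.

End UserTrajectory.

Theorem lemma1 (R : realType) (n N M : nat) (hn : (0 < n)%N) (hN : (0 < N)%N)
  (hM : (0 < M)%N)
  (a : 'I_N -> R) (lam : 'I_N -> R)
  (c : 'I_M -> 'rV[R]_n)
  (u : nat -> 'I_N -> 'rV[R]_n) (jsel : nat -> 'I_N -> 'I_M)
  (ha : forall i, 0 < a i <= 1)
  (hlam : forall i, 0 < lam i <= 1)
  (hc : forall j, in_cube (c j))
  (hu0 : forall i, in_cube (u 0%N i))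
  (hsel : forall t i, greedy_choice c (u t i) (jsel t i))
  (hdyn : forall t i,
     u t.+1 i = (1 - lam i) *: (a i *: u t i + (1 - a i) *: c (jsel t i))
                + lam i *: u 0%N i) :
  (forall t j, user_part jsel t j = user_part jsel 0%N j) /\
  (forall i, exists ustar : 'rV[R]_n, (fun t => u t i) @ \oo --> ustar) /\
  (forall j i, i \in user_part jsel 0%N j ->
     forall t, norm2 (u t.+1 i - c j) <= norm2 (u t i - c j)).
Proof.
have a_ge0 i : 0 <= a i by case/andP: (ha i) => /ltW.
have a_le1 i : a i <= 1 by case/andP: (ha i).
have lam_gt0 i : 0 < lam i by case/andP: (hlam i).
have lam_le1 i : lam i <= 1 by case/andP: (hlam i).
split; [|split].
- move=> t j; apply/setP => i; rewrite !inE.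
  by rewrite (selection_constant (a_ge0 i) (a_le1 i) (lam_gt0 i) (lam_le1 i)
    (hsel^~ i) (hdyn^~ i)).
- move=> i; exact: trajectory_cvg (a_ge0 i) (a_le1 i) (lam_gt0 i) (lam_le1 i)
    (hsel^~ i) (hdyn^~ i).
- move=> j i; rewrite inE => /eqP <-.
  exact: dist_selected_nonincreasing (a_ge0 i) (a_le1 i) (lam_gt0 i) (lam_le1 i)
    (hsel^~ i) (hdyn^~ i).
Qed.
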